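(* For all integers $n\geqslant 1$ and $d\geqslant 2$, \[ f(n,d)\leqslant n+\log_2 n\cdot f(n,d-1). \]
   Context: A box in $\mathbb R^d$ is a set of the form $[a_1,b_1]\times\cdots\times[a_d,b_d]$ (edges parallel to the coordinate axes). For a family $\mathscr B$ of boxes, $\nu(\mathscr B)$ is the maximal number of pairwise disjoint members of $\mathscr B$, and $\tau(\mathscr B)$ is the minimal number of points in a set meeting every member of $\mathscr B$. For integers $n\geqslant 1$, $d\geqslant 1$, $f(n,d)$ denotes the supremum of $\tau(\mathscr B)$ over all families $\mathscr B$ of boxes in $\mathbb R^d$ with $\nu(\mathscr B)=n$; by convention $f(0,d)=0$. The statement presupposes that these quantities are finite. *)

From Stdlib Require Import Reals.
From mathcomp Require Import ssreflect ssrfun ssrbool eqtype ssrnat fintype.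

Open Scope R_scope.

Definition point (d : nat) := 'I_d -> R.

Record box (d : nat) := Box { lo : point d; hi : point d }.
Arguments lo {d}. Arguments hi {d}.

Definition box_wf {d} (B : box d) : Prop := forall i, lo B i <= hi B i.

Definition in_box {d} (x : point d) (B : box d) : Prop :=
  forall i, lo B i <= x i <= hi B i.

Definition boxes_disjoint {d} (B C : box d) : Prop :=
  ~ (exists x : point d, in_box x B /\ in_box x C).

Definition box_family (d : nat) := box d -> Prop.

Definition family_wf {d} (F : box_family d) : Prop := forall B, F B -> box_wf B.

Definition has_packing {d} (F : box_family d) (k : nat) : Prop :=
  exists g : 'I_k -> box d,
    (forall i, F (g i)) /\ (forall i j, i <> j -> boxes_disjoint (g i) (g j)).

Definition nu_eq {d} (F : box_family d) (n : nat) : Prop :=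
  has_packing F n /\ ~ has_packing F n.+1.

Definition pierced_by {d} (F : box_family d) (k : nat) : Prop :=
  exists p : 'I_k -> point d, forall B, F B -> exists i, in_box (p i) B.

Definition log2 (x : R) : R := ln x / ln 2.

From Stdlib Require Import Reals Lra Lia ZArith Classical ClassicalEpsilon.
From mathcomp Require Import ssreflect ssrfun ssrbool eqtype ssrnat fintype finset prime.
From mathcomp Require Import zify.

Open Scope R_scope.

(* Let 2^L <= n < 2^(L+1).  Cut the family by a hyperplane orthogonal to the
   last axis such that neither open side contains 2^L pairwise disjoint boxes,
   and recurse into both sides: after j rounds there are 2^j pairwise
   separated regions.  The boxes met by the 2^j hyperplanes of one round,
   intersected with their hyperplane and placed side by side in R^(d-1), form
   a family with nu <= n, hence (padded with far-away points to nu = n) they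
   are pierced by f(n,d-1) points.  After L rounds each of the 2^L regions
   contains no two disjoint boxes and is pierced by a single point (Helly in
   dimension one, coordinatewise).  In total 2^L + L f(n,d-1) points. *)

Definition asbool (P : Prop) : bool :=
  if excluded_middle_informative P then true else false.

Lemma asboolP (P : Prop) : reflect P (asbool P).
Proof. by rewrite /asbool; case: excluded_middle_informative => H; constructor. Qed.

Lemma exists_max_ord k (f : 'I_k -> R) (x0 : R) :
  exists u, (x0 <= u /\ forall i, f i <= u) /\
            (forall t, x0 < t -> (forall i, f i < t) -> u < t).
Proof.
elim: k f => [|k IH] f.
  exists x0; split; last by move=> t Ht _.
  by split=> [|[]]; [lra |].
have [u [[Hx0 Hu] Hlub]] := IH (fun j => f (lift ord_max j)).
exists (Rmax u (f ord_max)); split; first split.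
- exact: Rle_trans Hx0 (Rmax_l _ _).
- move=> i; case: (unliftP ord_max i) => [j ->|->]; last exact: Rmax_r.
  exact: Rle_trans (Hu _) (Rmax_l _ _).
- move=> t Ht Hft; apply: Rmax_lub_lt; last exact: Hft.
  by apply: Hlub => // i; apply: Hft.
Qed.

Lemma exists_min_ord k (f : 'I_k -> R) (x0 : R) :
  exists u, (u <= x0 /\ forall i, u <= f i) /\
            (forall t, t < x0 -> (forall i, t < f i) -> t < u).
Proof.
have [u [[Hx0 Hu] Hlub]] := exists_max_ord _ (fun i => - f i) (- x0).
exists (- u); split; first split.
- lra.
- by move=> i; have := Hu i; lra.
- move=> t Ht Hft; suff : u < - t by lra.
  by apply: Hlub => [|i]; [lra | have := Hft i; lra].
Qed.

Definition image_family {d : nat} {T : Type} (P : T -> Prop) (f : T -> box d) :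
  box_family d := fun B => exists2 a, P a & B = f a.

Section Packings.

Context {d : nat}.
Implicit Types (B C : box d) (F G K E : box_family d).

Lemma boxes_disjoint_sym {B C} : boxes_disjoint B C -> boxes_disjoint C B.
Proof. by move=> HBC [x [HC HB]]; apply: HBC; exists x. Qed.

Lemma boxes_disjoint_coord {B C c} : hi B c < lo C c -> boxes_disjoint B C.
Proof. by move=> Hc [x [HB HC]]; have := HB c; have := HC c; lra. Qed.

Lemma in_box_lo {B} : box_wf B -> in_box (lo B) B.
Proof. by move=> HB c; split; [lra | exact: HB]. Qed.

Lemma has_packing0 F : has_packing F 0.
Proof. by exists (fun=> @Box d (fun=> 0) (fun=> 0)); split; case. Qed.

Lemma has_packing_leq {F a b} : (b <= a)%N -> has_packing F a -> has_packing F b.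
Proof.
move=> Hba [g [Hg Hd]]; exists (fun i => g (widen_ord Hba i)); split=> // i j Hij.
by apply: Hd => /(congr1 val) Eij; apply: Hij; apply: val_inj.
Qed.

Lemma has_packing_sub {F G k} :
  (forall B, F B -> G B) -> has_packing F k -> has_packing G k.
Proof. by move=> HFG [g [Hg Hd]]; exists g; split=> // i; apply: HFG. Qed.

Lemma pierced_by_sub {F G k} :
  (forall B, F B -> G B) -> pierced_by G k -> pierced_by F k.
Proof. by move=> HFG [p Hp]; exists p => B /HFG; apply: Hp. Qed.

Lemma pierced_by_union {F G K k1 k2} :
  pierced_by F k1 -> pierced_by G k2 -> (forall B, K B -> F B \/ G B) ->
  pierced_by K (k1 + k2).
Proof.
move=> [p1 H1] [p2 H2] HK.
exists (fun i => match split i with inl i1 => p1 i1 | inr i2 => p2 i2 end).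
move=> B /HK [/H1|/H2] [i Hi].
- by exists (lshift k2 i); rewrite (unsplitK (inl i)).
- by exists (rshift k1 i); rewrite (unsplitK (inr i)).
Qed.

Lemma has_packing_cat {F a b} {g1 : 'I_a -> box d} {g2 : 'I_b -> box d} :
  (forall i, F (g1 i)) -> (forall i j, i <> j -> boxes_disjoint (g1 i) (g1 j)) ->
  (forall i, F (g2 i)) -> (forall i j, i <> j -> boxes_disjoint (g2 i) (g2 j)) ->
  (forall i j, boxes_disjoint (g1 i) (g2 j)) -> has_packing F (a + b).
Proof.
move=> F1 D1 F2 D2 D12.
exists (fun k => match split k with inl i => g1 i | inr j => g2 j end); split.
  by move=> k; case: (split k).
move=> k l Hkl; case Ek: (split k) => [i|j]; case El: (split l) => [i'|j'].
- by apply: D1 => Eii'; apply: Hkl; rewrite -(splitK k) -(splitK l) Ek El Eii'.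
- exact: D12.
- exact/boxes_disjoint_sym/D12.
- by apply: D2 => Ejj'; apply: Hkl; rewrite -(splitK k) -(splitK l) Ek El Ejj'.
Qed.

Lemma has_packing2 {F B C} : F B -> F C -> boxes_disjoint B C -> has_packing F 2.
Proof.
move=> HB HC HBC.
have D1 (X : box d) (i j : 'I_1) : i <> j -> boxes_disjoint X X.
  by rewrite (ord1 i) (ord1 j) => /(_ erefl).
by apply: (@has_packing_cat F 1 1 (fun=> B) (fun=> C)) => [||||_ _] //; apply: D1.
Qed.

Lemma has_packing_restrict {F k} {g : 'I_k -> box d} (A : {set 'I_k}) :
  (forall i, i \in A -> F (g i)) ->
  (forall i j, i <> j -> boxes_disjoint (g i) (g j)) -> has_packing F #|A|.
Proof.
move=> HA Hd; exists (fun a => g (enum_val a)); split.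
  by move=> a; apply: HA; apply: enum_valP.
by move=> a b Hab; apply: Hd => /enum_val_inj.
Qed.

Lemma nu_eq_le {F n} : ~ has_packing F n.+1 -> exists2 m, (m <= n)%N & nu_eq F m.
Proof.
elim: n => [|n IHn] Hn; first by exists 0%N; [|split; [apply: has_packing0|]].
case: (classic (has_packing F n.+1)) => Hn1; first by exists n.+1.
by case: (IHn Hn1) => m Hm Hnu; exists m => //; lia.
Qed.

Lemma has_packing_union {F K E a b} :
  (forall B, F B -> K B \/ E B) ->
  ~ has_packing K a.+1 -> ~ has_packing E b.+1 -> ~ has_packing F (a + b).+1.
Proof.
move=> HF HK HE [g [Hg Hd]].
pose S := [set i | asbool (K (g i))].
have := cardsC S; rewrite card_ord => HS.
case: (ltnP a #|S|) => Ha.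
- apply: HK; apply: (has_packing_leq Ha).
  by apply: (has_packing_restrict S) Hd => i; rewrite inE => /asboolP.
- apply: HE; apply: (@has_packing_leq _ #|~: S|); first lia.
  apply: (has_packing_restrict (~: S)) Hd => i; rewrite !inE => /asboolP HKi.
  by case: (HF _ (Hg i)).
Qed.

Lemma has_packing_image_finite r (h : nat -> box d) :
  (forall j, box_wf (h j)) -> ~ has_packing (image_family (fun j => (j < r)%N) h) r.+1.
Proof.
move=> Hwf [g [Hg Hd]].
have [f Hf] : exists f : 'I_r.+1 -> 'I_r, forall i, g i = h (f i).
  apply: (choice (fun i (j : 'I_r) => g i = h j)) => i.
  by case: (Hg i) => j Hj ->; exists (Ordinal Hj).
suff /leq_card : injective f by rewrite !card_ord ltnn.
move=> i j Eij; apply: NNPP => /Hd; apply; exists (lo (g i)).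
by rewrite !Hf -Eij; split; apply: in_box_lo.
Qed.

Lemma has_packing_image_transfer {T : Type} {d' : nat} {P : T -> Prop}
    {src : T -> box d} {img : T -> box d'} {F k} :
  (forall a, P a -> F (src a)) ->
  (forall a b, P a -> P b -> boxes_disjoint (img a) (img b) ->
     boxes_disjoint (src a) (src b)) ->
  has_packing (image_family P img) k -> has_packing F k.
Proof.
move=> HF Hrefl [g [Hg Hd]].
have [a Ha] : exists a : 'I_k -> T, forall i, P (a i) /\ g i = img (a i).
  by apply: (choice (fun i x => P x /\ g i = img x)) => i; case: (Hg i) => x; exists x.
exists (fun i => src (a i)); split; first by move=> i; apply: HF; case: (Ha i).
move=> i j Hij; case: (Ha i) => Pi Ei; case: (Ha j) => Pj Ej.
by apply: Hrefl => //; rewrite -Ei -Ej; apply: Hd.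
Qed.

(* One-dimensional Helly: in each coordinate the left ends of the boxes lie
   below all right ends, so their supremum is a common coordinate. *)
Lemma has_common_point G :
  ~ has_packing G 2 -> exists p : point d, forall B, G B -> in_box p B.
Proof.
move=> HG.
have lo_le_hi B C c : G B -> G C -> lo B c <= hi C c.
  move=> HB HC; apply: Rnot_lt_le => Hlt; apply: HG.
  exact: (has_packing2 HC HB (boxes_disjoint_coord Hlt)).
case: (classic (exists B, G B)) => [[B0 HB0]|Hno]; last first.
  by exists (fun=> 0) => B HB; case: Hno; exists B.
pose E c x := exists2 B, G B & x = lo B c.
have Hbound c : bound (E c) by exists (hi B0 c) => _ [B HB ->]; apply: lo_le_hi.
have Hne c : exists x, E c x by exists (lo B0 c), B0.
exists (fun c => proj1_sig (completeness _ (Hbound c) (Hne c))) => B HB c.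
case: (completeness _ (Hbound c) (Hne c)) => /= m [Hub Hlub]; split.
- by apply: Hub; exists B.
- by apply: Hlub => _ [C HC ->]; apply: lo_le_hi.
Qed.

Definition below G c s : box_family d := fun B => G B /\ hi B c < s.
Definition above G c s : box_family d := fun B => G B /\ s < lo B c.
Definition crossing G c s : box_family d := fun B => G B /\ lo B c <= s <= hi B c.

Lemma has_packing_cat_below {G c s k} {g : 'I_k -> box d} :
  has_packing (below G c s) k -> (forall i, G (g i)) ->
  (forall i j, i <> j -> boxes_disjoint (g i) (g j)) ->
  (forall i, s <= lo (g i) c) -> has_packing G (k + k).
Proof.
move=> [g' [Hg' Hd']] Hg Hd Hs; apply: (has_packing_cat _ Hd' _ Hd) => //.
- by move=> i; case: (Hg' i).
- move=> i j; apply: (boxes_disjoint_coord (c := c)).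
  by case: (Hg' i) => _; have := Hs j; lra.
Qed.

(* The cut is the supremum of the thresholds [s] below which [G] has no
   [k]-packing. *)
Lemma exists_balanced_cut G c k : ~ has_packing G (k + k) ->
  exists t, ~ has_packing (below G c t) k /\ ~ has_packing (above G c t) k.
Proof.
move=> HG; case: (classic (has_packing G k)) => [[g0 [Hg0 Hd0]]|HGk]; last first.
  by exists 0; split=> /(has_packing_sub (fun B => @proj1 _ _)).
pose S s := ~ has_packing (below G c s) k.
have [s0 [[_ Hs0] _]] := exists_max_ord _ (fun i => hi (g0 i) c) 0.
have [s1 [[_ Hs1] _]] := exists_min_ord _ (fun i => lo (g0 i) c) 0.
have HS1 : S s1 by move=> Hb; apply: HG; apply: (has_packing_cat_below Hb).
have Hbound : bound S.
  exists (s0 + 1) => s Ss; apply: Rnot_lt_le => Hlt; apply: Ss.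
  by exists g0; split=> // i; split=> //; have := Hs0 i; lra.
have [t [Hub Hlub]] := completeness S Hbound (ex_intro _ s1 HS1).
exists t; split=> -[g [Hg Hd]].
- have [u [[_ Hu] Hut]] := exists_max_ord _ (fun i => hi (g i) c) (t - 1).
  have {}Hut : u < t by apply: Hut => [|i]; [lra | case: (Hg i)].
  have [s Ss Hus] : exists2 s, S s & u < s.
    apply: NNPP => Hno; suff : t <= u by lra.
    by apply: Hlub => s Ss; apply: Rnot_lt_le => Hlt; apply: Hno; exists s.
  apply: Ss; exists g; split=> // i; case: (Hg i) => HGi _; split=> //.
  by have := Hu i; lra.
- have [u [[_ Hu] Hut]] := exists_min_ord _ (fun i => lo (g i) c) (t + 1).
  have {}Hut : t < u by apply: Hut => [|i]; [lra | case: (Hg i)].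
  have Su : ~ S u by move/Hub; lra.
  apply: Su => Hb; apply: HG; apply: (has_packing_cat_below Hb _ Hd) => // i.
  by case: (Hg i).
Qed.

End Packings.

Section Halves.

Context {d : nat}.
Implicit Types (B C : box d) (G : nat -> box_family d) (N : nat).

Definition family_union N G : box_family d := fun B => exists2 i, (i < N)%N & G i B.

Definition separated N G : Prop :=
  forall i j B C, (i < N)%N -> (j < N)%N -> i <> j -> G i B -> G j C ->
    boxes_disjoint B C.

(* Family [j] is the part of [G j./2] below (even [j]) or above (odd [j]) the cut. *)
Definition halves G (c : 'I_d) (t : nat -> R) : nat -> box_family d :=
  fun j => (if odd j then above else below) (G j./2) c (t j./2).

Lemma halves_sub {G c t j B} : halves G c t j B -> G j./2 B.
Proof. by rewrite /halves; case: (odd j) => -[]. Qed.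

Lemma family_union_halves N G c t B :
  family_union (2 * N) (halves G c t) B -> family_union N G B.
Proof. by move=> [j Hj /halves_sub HB]; exists j./2 => //; lia. Qed.

Lemma separated_halves {N G} c t :
  separated N G -> separated (2 * N) (halves G c t).
Proof.
move=> HG i j B C Hi Hj Hij HB HC.
case: (eqVneq i./2 j./2) => [Eij|Nij]; last first.
  by apply: (HG i./2 j./2 _ _ _ _ _ (halves_sub HB) (halves_sub HC)); [lia|lia|apply/eqP].
move: HB HC; rewrite /halves -Eij.
case Oi: (odd i); case Oj: (odd j) => -[_ HB] [_ HC]; try lia.
- exact/boxes_disjoint_sym/boxes_disjoint_coord/(Rlt_trans _ _ _ HC HB).
- exact/boxes_disjoint_coord/(Rlt_trans _ _ _ HB HC).
Qed.

Lemma family_union_cover N G c t B :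
  family_union N G B ->
  family_union (2 * N) (halves G c t) B \/
  family_union N (fun i => crossing (G i) c (t i)) B.
Proof.
move=> [i Hi HB].
have Hhalf (b : bool) : (2 * i + b)./2 = i /\ odd (2 * i + b) = b.
  by case: b; split; lia.
case: (Rlt_le_dec (hi B c) (t i)) => Hlo.
  left; exists (2 * i + false)%N; first lia.
  by rewrite /halves; case: (Hhalf false) => -> ->.
case: (Rlt_le_dec (t i) (lo B c)) => Hhi.
  left; exists (2 * i + true)%N; first lia.
  by rewrite /halves; case: (Hhalf true) => -> ->.
by right; exists i.
Qed.

End Halves.

(* [compress i] maps the real line monotonically into the slot
   [(4 i - 2, 4 i + 2)]; [slot] recovers [i] from any point of that slot. *)
Definition compress (i : nat) (x : R) : R := 4 * INR i + atan x.

Definition slot (y : R) : nat := (Z.to_nat (up ((y + 2) / 4))).-1.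

Lemma compress_le i x y : x <= y -> compress i x <= compress i y.
Proof.
rewrite /compress => -[Hxy|<-]; last lra.
by have := atan_increasing _ _ Hxy; lra.
Qed.

Lemma compress_bounds i x : 4 * INR i - 2 < compress i x < 4 * INR i + 2.
Proof. by rewrite /compress; have := atan_bound x; have := PI_4; lra. Qed.

Lemma slotE i y : 4 * INR i - 2 < y < 4 * INR i + 2 -> slot y = i.
Proof.
move=> Hy; rewrite /slot -(tech_up ((y + 2) / 4) (Z.of_nat i.+1)).
- by rewrite Nat2Z.id.
- by rewrite -INR_IZR_INZ S_INR; lra.
- by rewrite -INR_IZR_INZ S_INR; lra.
Qed.

Lemma compress_inv i a b y :
  compress i a <= y <= compress i b -> a <= tan (y - 4 * INR i) <= b.
Proof.
rewrite /compress => Hy.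
have Hz : - (PI / 2) < y - 4 * INR i < PI / 2.
  by have := atan_bound a; have := atan_bound b; lra.
have Ez := atan_tan _ Hz.
by split; apply: Rnot_lt_le => /atan_increasing; rewrite Ez; lra.
Qed.

Section Slices.

Context {e : nat}.
Implicit Types (B : box e.+2) (x : point e.+2) (q : point e.+1).

(* Drop the last coordinate and squeeze the first one into slot [i]. *)
Definition slice_point (i : nat) x : point e.+1 := fun c =>
  if c == ord0 then compress i (x (lift ord_max c)) else x (lift ord_max c).

Definition slice_box (i : nat) B : box e.+1 :=
  @Box e.+1 (slice_point i (lo B)) (slice_point i (hi B)).

Lemma slice_point_le i x y c :
  x (lift ord_max c) <= y (lift ord_max c) -> slice_point i x c <= slice_point i y c.
Proof. by rewrite /slice_point; case: (c == ord0) => // /(compress_le i). Qed.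

Lemma in_box_slice i x B : in_box x B -> in_box (slice_point i x) (slice_box i B).
Proof. by move=> HxB c; case: (HxB (lift ord_max c)); split; apply: slice_point_le. Qed.

Lemma slice_box_wf i B : box_wf B -> box_wf (slice_box i B).
Proof. by move=> HB c; apply: slice_point_le. Qed.

Lemma slice_box_hi0 i B : hi (slice_box i B) ord0 < 4 * INR i + 2.
Proof.
by rewrite /= /slice_point eqxx; case: (compress_bounds i (hi B (lift ord_max ord0))).
Qed.

(* A point [q] of slot [i] lifts back to the cutting hyperplane [x_last = t i]. *)
Definition unslice (t : nat -> R) q : point e.+2 := fun j =>
  let i := slot (q ord0) in
  match unlift ord_max j with
  | Some c => if c == ord0 then tan (q c - 4 * INR i) else q c
  | None => t i
  end.

Lemma in_box_unslice {t i B q} :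
  lo B ord_max <= t i <= hi B ord_max -> in_box q (slice_box i B) ->
  in_box (unslice t q) B.
Proof.
move=> Ht Hq.
have Hslot : slot (q ord0) = i.
  apply: slotE; have := Hq ord0; rewrite /= /slice_point eqxx.
  by have := compress_bounds i (lo B (lift ord_max ord0));
     have := compress_bounds i (hi B (lift ord_max ord0)); lra.
move=> j; rewrite /unslice Hslot; case: unliftP => [c ->|->] //.
have := Hq c; rewrite /= /slice_point.
by case: eqP => [->|_] //; apply: compress_inv.
Qed.

End Slices.

Definition piercing_bound (d n : nat) (M : R) : Prop :=
  forall F : box_family d, family_wf F -> nu_eq F n ->
    exists k, pierced_by F k /\ INR k <= M.

Section Piercing.

Context {e n : nat} {M : R}.
Hypothesis HM : piercing_bound e.+1 n M.

Definition far_point (A : R) (j : nat) : box e.+1 :=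
  let p (c : 'I_e.+1) := if c == ord0 then A + 1 + INR j else 0 in @Box e.+1 p p.

Lemma far_point_disjoint A i j : i <> j -> boxes_disjoint (far_point A i) (far_point A j).
Proof.
move=> Hij [x [Hi Hj]]; apply/Hij/INR_eq.
by have := Hi ord0; have := Hj ord0; rewrite /=; lra.
Qed.

(* Padding [K] with far-away points raises its packing number to exactly [n]. *)
Lemma pierce_nu_le_bounded {K : box_family e.+1} {A} :
  family_wf K -> (forall B, K B -> hi B ord0 <= A) -> ~ has_packing K n.+1 ->
  exists k, pierced_by K k /\ INR k <= M.
Proof.
move=> Kwf KA Kn; have [m Hmn [[g [Hg Hd]] Km]] := nu_eq_le Kn.
pose E := image_family (fun j => (j < n - m)%N) (far_point A).
pose K' B := K B \/ E B.
have K'wf : family_wf K' by move=> _ [/Kwf //|[j _ ->] c] /=; lra.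
have K'nu : nu_eq K' n.
  have Hn : n = (m + (n - m))%N by lia.
  split; rewrite Hn.
  - apply: (@has_packing_cat _ _ _ _ g (fun j : 'I_(n - m) => far_point A j)) => //.
    + by move=> i; left.
    + by move=> j; right; exists j.
    + by move=> i j Hij; apply: far_point_disjoint => /val_inj.
    + move=> i j; apply: (boxes_disjoint_coord (c := ord0)) => /=.
      by have := KA _ (Hg i); have := pos_INR j; lra.
  - apply: (has_packing_union (K := K) (E := E)) => //.
    by apply: has_packing_image_finite => j c /=; lra.
have [k [Hk Hkb]] := HM K' K'wf K'nu.
by exists k; split=> //; apply: (pierced_by_sub _ Hk) => B HB; left.
Qed.

Lemma piercing_bound_ge0 : 0 <= M.
Proof.
have Hempty : ~ has_packing ((fun=> False) : box_family e.+1) n.+1.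
  by case=> g [/(_ ord0)].
have [k [_ Hk]] :=
  pierce_nu_le_bounded (A := 0) (fun _ => False_ind _) (fun _ => False_ind _) Hempty.
by have := pos_INR k; lra.
Qed.

Lemma pierce_crossing {N} {G : nat -> box_family e.+2} (t : nat -> R) :
  family_wf (family_union N G) -> ~ has_packing (family_union N G) n.+1 ->
  separated N G ->
  exists k, pierced_by (family_union N (fun i => crossing (G i) ord_max (t i))) k /\
            INR k <= M.
Proof.
move=> Gwf Gn HG.
pose P (a : nat * box e.+2) := (a.1 < N)%N /\ crossing (G a.1) ord_max (t a.1) a.2.
pose K := image_family P (fun a => slice_box a.1 a.2).
have Kwf : family_wf K.
  by move=> _ [[i B] [Hi [HB _]] ->]; apply/slice_box_wf/Gwf; exists i.
have KA B : K B -> hi B ord0 <= 4 * INR N.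
  move=> [[i B'] [/= Hi _] ->]; have := slice_box_hi0 i B'.
  by have := le_INR _ _ (elimT leP Hi); rewrite S_INR /=; lra.
have Kn : ~ has_packing K n.+1.
  apply: contra_not Gn; apply: (has_packing_image_transfer (src := snd)).
  - by move=> [i B] [Hi [HB _]]; exists i.
  - move=> [i B] [j C] [Hi [HB _]] [Hj [HC _]] /= HBC [x [HxB HxC]].
    case: (eqVneq i j) => [Eij|Nij].
      by apply: HBC; exists (slice_point i x); rewrite -Eij; split; apply: in_box_slice.
    by apply: (HG i j B C) => //; [apply/eqP | exists x].
have [k [[q Hq] Hk]] := pierce_nu_le_bounded Kwf KA Kn.
exists k; split=> //; exists (fun a => unslice t (q a)) => B [i Hi [HB Ht]].
have [a Ha] := Hq (slice_box i B) (ex_intro2 _ _ (i, B) (conj Hi (conj HB Ht)) erefl).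
by exists a; apply: (in_box_unslice Ht Ha).
Qed.

Lemma pierce_separated L : forall N (G : nat -> box_family e.+2),
  family_wf (family_union N G) -> ~ has_packing (family_union N G) n.+1 ->
  separated N G -> (forall i, (i < N)%N -> ~ has_packing (G i) (2 ^ L.+1)) ->
  exists k, pierced_by (family_union N G) k /\ INR k <= INR (N * 2 ^ L) + INR L * M.
Proof.
elim: L => [|L IHL] N G Gwf Gn HG HGi.
  pose common (i : 'I_N) p := forall B, G i B -> in_box p B.
  have [p Hp] : exists p : 'I_N -> point e.+2, forall i, common i (p i).
    apply: (choice common) => i.
    exact/has_common_point/HGi.
  exists N; split; first by exists p => B [i Hi HB]; exists (Ordinal Hi); apply: Hp.
  by rewrite expn0 muln1 /=; lra.
pose cut_at i s := (i < N)%N ->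
  ~ has_packing (below (G i) ord_max s) (2 ^ L.+1) /\
  ~ has_packing (above (G i) ord_max s) (2 ^ L.+1).
have [t Ht] : exists t : nat -> R, forall i, cut_at i (t i).
  apply: (choice cut_at) => i; case: (leqP N i) => Hi.
    by exists 0; rewrite /cut_at; lia.
  have HGi2 : ~ has_packing (G i) (2 ^ L.+1 + 2 ^ L.+1).
    by rewrite addnn -mul2n -expnS; apply: HGi.
  by have [s Hs] := exists_balanced_cut _ ord_max _ HGi2; exists s.
pose H := halves G ord_max t.
have Hwf : family_wf (family_union (2 * N) H).
  by move=> B /family_union_halves; apply: Gwf.
have Hn : ~ has_packing (family_union (2 * N) H) n.+1.
  by apply: contra_not Gn; apply: has_packing_sub; apply: family_union_halves.
have Hj j : (j < 2 * N)%N -> ~ has_packing (H j) (2 ^ L.+1).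
  move=> Hj; have [|Hb Ha] := Ht j./2; first lia.
  by rewrite /H /halves; case: (odd j).
have [k1 [Hk1 Hk1b]] := IHL _ _ Hwf Hn (separated_halves ord_max t HG) Hj.
have [k2 [Hk2 Hk2b]] := pierce_crossing t Gwf Gn HG.
exists (k1 + k2)%N; split.
  by apply: (pierced_by_union Hk1 Hk2) => B; apply: family_union_cover.
have -> : (N * 2 ^ L.+1 = 2 * N * 2 ^ L)%N by rewrite expnS; lia.
by rewrite (plus_INR k1 k2) S_INR; lra.
Qed.

End Piercing.

Lemma INR_expn m k : INR (m ^ k) = INR m ^ k.
Proof. by elim: k => [|k IHk] //=; rewrite expnS -multE mult_INR IHk. Qed.

Lemma trunc_log2_le_log2 {n} : (0 < n)%N -> INR (trunc_log 2 n) <= log2 (INR n).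
Proof.
move=> Hn; have Hln2 : 0 < ln 2 by rewrite -ln_1; apply: ln_increasing; lra.
rewrite /log2; apply: (Rmult_le_reg_r (ln 2)) => //.
rewrite /Rdiv Rmult_assoc Rinv_l ?Rmult_1_r; last lra.
rewrite -ln_pow; last lra.
have := le_INR _ _ (elimT leP (trunc_logP (isT : 1 < 2)%N Hn)).
rewrite INR_expn => /Rle_lt_or_eq_dec [Hlt|->]; last exact: Rle_refl.
by apply/Rlt_le/ln_increasing => //; apply: pow_lt; lra.
Qed.

Theorem lemma1 (n d : nat) (M : R) :
  (1 <= n)%N -> (2 <= d)%N ->
  (forall F : box_family (d - 1)%N, family_wf F -> nu_eq F n ->
     exists k : nat, pierced_by F k /\ (INR k <= M)%R) ->
  forall F : box_family d, family_wf F -> nu_eq F n ->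
    exists k : nat, pierced_by F k /\
      (INR k <= INR n + log2 (INR n) * M)%R.
Proof.
move=> Hn Hd Hbound F Fwf [_ Fn].
case: d Hd Hbound F Fwf Fn => [|[|e]] // _ Hbound F Fwf Fn.
have {}Hbound : piercing_bound e.+1 n M := Hbound.
have HM : 0 <= M := piercing_bound_ge0 Hbound.
pose L := trunc_log 2 n.
have HnL : (n < 2 ^ L.+1)%N := trunc_log_ltn _ (isT : 1 < 2)%N.
have H2L : INR (2 ^ L) <= INR n := le_INR _ _ (elimT leP (trunc_logP (isT : 1 < 2)%N Hn)).
have HL : INR L <= log2 (INR n) := trunc_log2_le_log2 Hn.
have [||||k [Hk Hkb]] := pierce_separated Hbound L 1 (fun=> F).
- by move=> B [_ _]; apply: Fwf.
- by apply: contra_not Fn; apply: has_packing_sub => B [].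
- by move=> i j B C Hi Hj; lia.
- by move=> i _; apply: contra_not Fn; apply: has_packing_leq.
exists k; split; first by apply: (pierced_by_sub _ Hk) => B HB; exists 0%N.
by rewrite mul1n in Hkb; nra.
Qed.
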